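(* Let $f$ be a scale mixture of normals (SMN) density with shape parameter $\delta\in\Delta\subset\mathbb{R}$, i.e. $f(z\mid\delta)=\int_{\mathbb{R}_+}\tau^{1/2}\phi(\tau^{1/2}z)\,dH(\tau\mid\delta)$, where $\phi$ is the standard normal density and $H(\cdot\mid\delta)$ is a mixing distribution on $\mathbb{R}_+$. Consider the linear regression model $y_j={\bf x}_j^{\top}\bm\beta+\varepsilon_j$, $j=1,\dots,n$, where $\bm\beta\in\mathbb{R}^p$, ${\bf X}=({\bf x}_1^\top,\dots,{\bf x}_n^\top)^\top$ is a known $n\times p$ design matrix of full column rank, and $\varepsilon_j\stackrel{i.i.d.}{\sim}\mathrm{TP}(0,\sigma,\delta,\gamma;f)$. Adopt the prior $\pi(\bm\beta,\sigma,\delta,\gamma)\propto \pi(\gamma)\pi(\delta)/\sigma^{q}$ with $q\ge 0$ and $\pi(\gamma)$, $\pi(\delta)$ proper priors on $\Gamma$ and $\Delta$. Consider the conditions: (i) the posterior of $(\bm\beta,\sigma,\delta)$ associated with the linear regression model $y_j={\bf x}_j^\top\bm\beta+\varepsilon_j$ with errors $\varepsilon_j$ i.i.d. with symmetric density $\sigma^{-1}f(\cdot/\sigma\mid\delta)$, together with the prior $\pi(\bm\beta,\sigma,\delta)\propto\sigma^{-q}\pi(\delta)$, is proper; (ii) $\int_{\Gamma}\frac{h(\gamma)^{n+q-1}}{[a(\gamma)+b(\gamma)]^n}\pi(\gamma)\,d\gamma<\infty$, where $h(\gamma)=\min\{a(\gamma),b(\gamma)\}$; (iii) $\int_{\Gamma}\frac{H(\gamma)^{n+q-1}}{[a(\gamma)+b(\gamma)]^n}\pi(\gamma)\,d\gamma<\infty$,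 where $H(\gamma)=\max\{a(\gamma),b(\gamma)\}$. Then (i) and (ii) are necessary conditions, and (i) and (iii) are sufficient conditions, for the propriety of the posterior distribution of $(\bm\beta,\sigma,\delta,\gamma)$.
   Context: The two-piece distribution $\mathrm{TP}(\mu,\sigma,\delta,\gamma;f)$, for a symmetric density $f(\cdot\mid\delta)$ on $\mathbb{R}$ with mode at $0$, has density $g(z\mid\mu,\sigma,\delta,\gamma)=\frac{2}{\sigma[a(\gamma)+b(\gamma)]}\left[f\!\left(\frac{z-\mu}{\sigma b(\gamma)}\Big|\delta\right)I(z<\mu)+f\!\left(\frac{z-\mu}{\sigma a(\gamma)}\Big|\delta\right)I(z\ge\mu)\right]$, $z\in\mathbb{R}$, where $\mu\in\mathbb{R}$, $\sigma>0$, $\gamma\in\Gamma\subset\mathbb{R}$ is a skewness parameter and $a(\cdot),b(\cdot)$ are given positive functions on $\Gamma$. The likelihood is $\prod_{j=1}^n g(y_j-{\bf x}_j^\top\bm\beta\mid 0,\sigma,\delta,\gamma)$, and the posterior is the (possibly improper) product of likelihood and prior; ''proper'' means that this product has finite integral over the parameter space. *)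

From mathcomp Require Import all_boot all_order all_algebra.
From mathcomp Require Import all_classical all_reals all_analysis.
Set Implicit Arguments. Unset Strict Implicit. Unset Printing Implicit Defensive.
Import Order.TTheory GRing.Theory Num.Theory.
Local Open Scope ring_scope.
Local Open Scope classical_set_scope.

Section Defs.
Variable R : realType.

Definition smn_density (H : R.-pker R ~> R) (z delta : R) : \bar R :=
  (\int[H delta]_(t in `]0%R, +oo[) (Num.sqrt t * normal_pdf 0 1 (Num.sqrt t * z))%:E)%E.

Definition tp_density (f : R -> R -> \bar R) (a b : R -> R)
    (mu sigma delta gamma z : R) : \bar R :=
  (((2 / (sigma * (a gamma + b gamma)))%:E) *
    (if (z < mu)%R then f ((z - mu) / (sigma * b gamma))%R delta
     else f ((z - mu) / (sigma * a gamma))%R delta))%E.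

(* Lebesgue integral over R^k, written as an iterated integral (vectors are
   sequences of length k, first coordinate integrated outermost). *)
Fixpoint int_Rk (k : nat) (F : seq R -> \bar R) : \bar R :=
  match k with
  | 0 => F [::]
  | k'.+1 => (\int[@lebesgue_measure R]_(x in [set: R]) int_Rk k' (fun s => F (x :: s)))%E
  end.

Definition lin_pred (n p : nat) (X : 'M[R]_(n, p)) (beta : seq R) (j : 'I_n) : R :=
  \sum_(i < p) X j i * nth 0 beta i.

Definition post_mass_TP (n p : nat) (X : 'M[R]_(n, p)) (y : 'I_n -> R)
    (f : R -> R -> \bar R) (a b : R -> R) (q : R)
    (Delta Gamma : set R) (pi_delta pi_gamma : R -> R) : \bar R :=
  (\int[@lebesgue_measure R]_(gamma in Gamma)
   \int[@lebesgue_measure R]_(delta in Delta)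
   \int[@lebesgue_measure R]_(sigma in `]0%R, +oo[)
    int_Rk p (fun beta =>
      (\prod_(j < n) tp_density f a b 0%R sigma delta gamma (y j - lin_pred X beta j)%R) *
      (sigma `^ (- q) * pi_delta delta * pi_gamma gamma)%:E))%E.

Definition post_mass_sym (n p : nat) (X : 'M[R]_(n, p)) (y : 'I_n -> R)
    (f : R -> R -> \bar R) (q : R) (Delta : set R) (pi_delta : R -> R) : \bar R :=
  (\int[@lebesgue_measure R]_(delta in Delta)
   \int[@lebesgue_measure R]_(sigma in `]0%R, +oo[)
    int_Rk p (fun beta =>
      (\prod_(j < n) ((sigma^-1)%:E * f ((y j - lin_pred X beta j) / sigma)%R delta)) *
      (sigma `^ (- q) * pi_delta delta)%:E))%E.

End Defs.

(* The symmetric density f is nonincreasing in |z|, so with h = min(a, b) and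
   H = max(a, b) the two-piece density is squeezed between
   2 / (sigma (a + b)) * f (z / (sigma h)) and 2 / (sigma (a + b)) * f (z / (sigma H)).
   Substituting sigma' = c sigma (c = h or H) in the sigma-integral turns the
   two-piece posterior mass at fixed gamma into
   2^n c^(n+q-1) / (a + b)^n * pi(gamma) times the mass M of the symmetric model.
   Integrating over gamma, the two-piece mass lies between 2^n M times the
   integrals in (ii) and (iii). Sufficiency follows from the upper bound;
   necessity from the lower one, because M > 0: the scale mixture is positive
   and bounded below on the box 1 <= sigma <= 2, |beta_i| <= 1. *)

From HB Require Import structures.
From mathcomp Require Import all_boot all_order all_algebra.
From mathcomp Require Import all_classical all_reals all_analysis.
From mathcomp Require Import measurable_realfun ring lra.
Import Order.TTheory GRing.Theory Num.Theory.
Import numFieldNormedType.Exports.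
Set Implicit Arguments. Unset Strict Implicit. Unset Printing Implicit Defensive.
Local Open Scope ring_scope.
Local Open Scope classical_set_scope.

Section extended_reals.
Local Open Scope ereal_scope.
Context (R : realDomainType).

Lemma lt_pinfty_mule_gt0 (x y : \bar R) : 0 < x -> 0 < y -> x * y < +oo ->
  x < +oo /\ y < +oo.
Proof.
move=> x0 y0 xy; split; rewrite ltNge leye_eq; apply: contraTN xy => /eqP xy.
  by rewrite xy gt0_mulye// ltxx.
by rewrite xy gt0_muley// ltxx.
Qed.

Variables (I : Type) (s : seq I) (P : pred I).

Lemma lee_prod (F G : I -> \bar R) : (forall i, P i -> 0 <= F i <= G i) ->
  \prod_(i <- s | P i) F i <= \prod_(i <- s | P i) G i.
Proof.
move=> FG; suff /andP[] : 0 <= \prod_(i <- s | P i) F i <= \prod_(i <- s | P i) G i by [].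
apply: (big_ind2 (fun x y => 0 <= x <= y)) => //; first by rewrite lee01 lexx.
by move=> x1 x2 y1 y2 /andP[x10 x12] /andP[y10 y12]; rewrite mule_ge0//= lee_pmul.
Qed.

Lemma prode_gt0 (F : I -> \bar R) : (forall i, P i -> 0 < F i) ->
  0 < \prod_(i <- s | P i) F i.
Proof.
move=> F0; apply: (big_ind (fun x => 0 < x)) => [|x y|//]; first exact: lte01.
exact: mule_gt0.
Qed.

End extended_reals.

Section ge0_integral_sup.
Local Open Scope ereal_scope.
Context d (T : measurableType d) (R : realType).
Variable mu : {measure set T -> \bar R}.
Import HBNNSimple.

Lemma ge0_integral_gt0_support (D : set T) (u v : T -> \bar R) :
  measurable D -> measurable_fun D u -> measurable_fun D v ->
  (forall x, D x -> 0 <= u x) -> (forall x, D x -> 0 <= v x) ->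
  (forall x, D x -> u x != 0 -> v x != 0) ->
  0 < \int[mu]_(x in D) u x -> 0 < \int[mu]_(x in D) v x.
Proof.
move=> mD mu_ mv u0 v0 uv ipos.
rewrite lt0e integral_ge0// andbT; apply/negP => /eqP iv0.
have /(ae_eq_integral_abs mu mD mv) v_ae0 : \int[mu]_(x in D) `|v x| = 0.
  by rewrite -iv0; apply: eq_integral => x /set_mem Dx; rewrite gee0_abs// v0.
have u_ae0 : ae_eq mu D u (cst 0).
  apply: filterS v_ae0 => x vx0 Dx; have /= := vx0 Dx.
  by apply: contra_eq => /(uv x Dx).
move: ipos; rewrite (@ae_eq_integral _ _ _ mu D (cst 0) u mD mu_ _ u_ae0)//.
by rewrite integral0 ltxx.
Qed.

(* The integral of a nonnegative function is the supremum of the integrals of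
   the simple functions below it, so the next two facts need no measurability. *)
Lemma ge0_le_integral_subset (D1 D2 : set T) (f g : T -> \bar R) :
  D1 `<=` D2 -> (forall x, D1 x -> 0 <= f x) -> (forall x, D2 x -> 0 <= g x) ->
  (forall x, D1 x -> f x <= g x) ->
  \int[mu]_(x in D1) f x <= \int[mu]_(x in D2) g x.
Proof.
move=> D12 f0 g0 fg; rewrite !ge0_integralE//.
apply: ereal_sup_le => _ [h hf <-]; exists h => //= x.
apply: (le_trans (hf x)); rewrite /patch.
case: ifPn => [/set_mem D1x|_]; first by rewrite ifT ?inE; [exact: fg|exact: D12].
by case: ifPn => [/set_mem/g0|].
Qed.

Lemma ge0_integralZl_sup (D : set T) (f : T -> \bar R) (r : R) : (0 <= r)%R ->
  (forall x, D x -> 0 <= f x) ->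
  \int[mu]_(x in D) (r%:E * f x) = r%:E * \int[mu]_(x in D) f x.
Proof.
have Zf_ge0 (k : R) g : (0 <= k)%R -> (forall x, D x -> 0 <= g x) ->
    forall x, D x -> 0 <= k%:E * g x.
  by move=> k0 g0 x Dx; rewrite mule_ge0 ?lee_fin ?g0.
have leZ (k : R) g : (0 < k)%R -> (forall x, D x -> 0 <= g x) ->
    \int[mu]_(x in D) (k%:E * g x) <= k%:E * \int[mu]_(x in D) g x.
  move=> k0 g0; rewrite (@ge0_integralE _ _ _ mu D _ (Zf_ge0 _ _ (ltW k0) g0)).
  rewrite (@ge0_integralE _ _ _ mu D _ g0); apply: ge_ereal_sup => _ [h hg <-].
  have ki0 : (0 <= k^-1)%R by rewrite invr_ge0 ltW.
  pose h' := scale_nnsfun h ki0.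
  have -> : sintegral mu h = k%:E * sintegral mu h'.
    rewrite /h' /scale_nnsfun /= sintegralrM muleA -EFinM divff ?gt_eqF// mul1e.
    by apply: eq_sintegral.
  rewrite lee_pmul2l ?lte_fin//; apply: ereal_sup_ubound; exists h' => //= x.
  rewrite /h' /= /patch; have := hg x; rewrite /patch; case: ifPn => _.
    rewrite EFinM => hx; rewrite -(@lee_pmul2l _ k%:E) ?lte_fin// muleA -EFinM.
    by rewrite divff ?gt_eqF// mul1r.
  by rewrite [point]/(0%E) => hx; rewrite EFinM mule_ge0_le0// ?lee_fin.
rewrite le0r => /orP[/eqP->|r0] f0.
  by rewrite mul0e; under eq_integral do rewrite mul0e; rewrite integral0.
apply/eqP; rewrite eq_le leZ//=.
have ri0 : (0 < r^-1)%R by rewrite invr_gt0.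
have := leZ _ (fun x => r%:E * f x) ri0 (Zf_ge0 _ _ (ltW r0) f0).
under eq_integral do rewrite muleA -EFinM mulVf ?gt_eqF// mul1e.
by rewrite -(@lee_pmul2l _ r%:E) ?lte_fin// muleA -EFinM divff ?gt_eqF// mul1e.
Qed.

End ge0_integral_sup.

Section lebesgue_dilation.
Context (R : realType) (c : R).
Hypothesis c_gt0 : 0 < c.
Local Notation leb := (@lebesgue_measure R).
Let divc : measurableTypeR R -> measurableTypeR R := fun x => x / c.

Let measurable_divc : measurable_fun setT divc.
Proof. exact: mulrr_measurable. Qed.

Lemma lebesgue_measure_divr_preimage (A : set R) : measurable A ->
  leb (divc @^-1` A) = (c%:E * leb A)%E.
Proof.
move=> mA; have ci0 : 0 <= c^-1 by rewrite invr_ge0 ltW.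
pose pf := measure_function_pushforward__canonical__measure_function_Measure leb
  measurable_divc.
have := @lebesgue_measure_unique R (mscale (NngNum ci0) pf) _ A mA.
rewrite /= /mscale /pf /pushforward /= => ->.
  by rewrite muleA -EFinM divff ?gt_eqF// mul1e.
move=> _ [[u v]] _ <-; rewrite /mscale /pushforward /=.
have -> : divc @^-1` `]u, v] = `](u * c), (v * c)].
  by apply/seteqP; split => x /=; rewrite !in_itv/= ler_pdivrMr// ltr_pdivlMr.
rewrite !lebesgue_measure_itv/= !lte_fin ltr_pM2r//.
case: ifPn => _; last by rewrite mule0.
by rewrite -EFinD -EFinM -mulrBl mulrCA mulVf ?gt_eqF// mulr1.
Qed.

Import HBNNSimple.
Variable h : {nnsfun measurableTypeR R >-> R}.

Definition dilation_fun : measurableTypeR R -> R := h \o divc.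

Let measurable_dilation_fun : measurable_fun setT dilation_fun.
Proof. exact: measurableT_comp. Qed.
HB.instance Definition _ :=
  isMeasurableFun.Build _ _ _ _ dilation_fun measurable_dilation_fun.

Let finite_range_dilation_fun : finite_set (range dilation_fun).
Proof.
apply: (sub_finite_set _ (@fimfunP _ _ h)) => _ [x _ <-]; by exists (x / c).
Qed.
HB.instance Definition _ := FiniteImage.Build _ _ dilation_fun
  finite_range_dilation_fun.

Let dilation_fun_ge0 x : 0 <= dilation_fun x.
Proof. by []. Qed.
HB.instance Definition _ := isNonNegFun.Build _ _ dilation_fun dilation_fun_ge0.

Definition dilation_nnsfun : {nnsfun measurableTypeR R >-> R} := dilation_fun.

Lemma sintegral_dilation :
  sintegral leb dilation_nnsfun = (c%:E * sintegral leb h)%E.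
Proof.
rewrite /sintegral ge0_mule_fsumr; last by move=> v; exact: nnsfun_mulemu_ge0.
apply: eq_fsbigr => v _.
rewrite [X in leb X](_ : _ = divc @^-1` (h @^-1` [set v]))//.
rewrite lebesgue_measure_divr_preimage; first by rewrite muleCA.
exact: (measurable_funPTI h (measurable_set1 v)).
Qed.

End lebesgue_dilation.

Section ge0_integral_dilation.
Local Open Scope ereal_scope.
Context (R : realType).
Local Notation leb := (@lebesgue_measure R).
Import HBNNSimple.

Lemma ge0_integral_dilation (c : R) (F : R -> \bar R) : (0 < c)%R ->
  (forall x, (0 < x)%R -> 0 <= F x) ->
  \int[leb]_(x in `]0%R, +oo[) F (x * c)%R =
    (c^-1)%:E * \int[leb]_(x in `]0%R, +oo[) F x.
Proof.
have G0E (G : R -> \bar R) : (forall x, (0 < x)%R -> 0 <= G x) ->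
    forall x, `]0%R, +oo[ x -> 0 <= G x.
  by move=> G0 x; rewrite /= in_itv/= andbT; exact: G0.
have leD (k : R) (G : R -> \bar R) : (0 < k)%R -> (forall x, (0 < x)%R -> 0 <= G x) ->
    \int[leb]_(x in `]0%R, +oo[) G (x * k)%R <=
      (k^-1)%:E * \int[leb]_(x in `]0%R, +oo[) G x.
  move=> k0 G0; have Gk0 : forall x, (0 < x)%R -> 0 <= G (x * k)%R.
    by move=> x x0; rewrite G0// mulr_gt0.
  rewrite (@ge0_integralE _ _ _ leb _ _ (G0E _ Gk0)) (@ge0_integralE _ _ _ leb _ _ (G0E _ G0)).
  apply: ge_ereal_sup => _ [h hG <-].
  have -> : sintegral leb h = (k^-1)%:E * sintegral leb (dilation_nnsfun k h).
    by rewrite sintegral_dilation// muleA -EFinM mulVf ?gt_eqF// mul1e.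
  rewrite lee_pmul2l ?lte_fin ?invr_gt0//.
  apply: ereal_sup_ubound; exists (dilation_nnsfun k h) => //= x.
  have := hG (x / k)%R; rewrite /patch /= /dilation_fun /= mulrVK ?unitfE ?gt_eqF//.
  suff -> : ((x / k)%R \in `]0%R, +oo[) = (x \in `]0%R, +oo[) by [].
  by apply/idP/idP => /set_mem; rewrite /= !in_itv/= !andbT => ?; apply/mem_set;
    rewrite /= in_itv/= andbT ?divr_gt0// -(pmulr_lgt0 _ (_ : 0 < k^-1)%R) ?invr_gt0.
move=> c0 F0; apply/eqP; rewrite eq_le leD//=.
have ci0 : (0 < c^-1)%R by rewrite invr_gt0.
have := leD _ (fun x => F (x * c)%R) ci0.
under eq_integral do rewrite mulrVK ?unitfE ?gt_eqF//.
move=> /(_ (fun x x0 => F0 _ (mulr_gt0 x0 c0))); rewrite invrK => le_cF.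
by rewrite -(@lee_pmul2l _ c%:E) ?lte_fin// muleA -EFinM divff ?gt_eqF// mul1e.
Qed.

End ge0_integral_dilation.

Section int_Rk.
Local Open Scope ereal_scope.
Context (R : realType).
Local Notation leb := (@lebesgue_measure R).
Implicit Types (k : nat) (F G : seq R -> \bar R).

Lemma int_Rk_ge0 k F : (forall s, 0 <= F s) -> 0 <= int_Rk k F.
Proof.
by elim: k F => [|k IH] F F0 //=; apply: integral_ge0 => x _; exact: IH.
Qed.

Lemma le_int_Rk k F G : (forall s, 0 <= F s) -> (forall s, F s <= G s) ->
  int_Rk k F <= int_Rk k G.
Proof.
elim: k F G => [|k IH] F G F0 FG //=.
apply: ge0_le_integral_subset => // x _; last exact: IH.
- exact: int_Rk_ge0.
- by apply: int_Rk_ge0 => s; exact: le_trans (F0 _) (FG _).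
Qed.

Lemma int_RkZl k F (r : R) : (0 <= r)%R -> (forall s, 0 <= F s) ->
  int_Rk k (fun s => r%:E * F s) = r%:E * int_Rk k F.
Proof.
move=> r0; elim: k F => [|k IH] F F0 //=.
under eq_integral do rewrite IH//.
by rewrite ge0_integralZl_sup// => x _; exact: int_Rk_ge0.
Qed.

Lemma int_Rk_ge_cube k F (c : \bar R) : 0 <= c -> (forall s, 0 <= F s) ->
  (forall s, size s = k -> all (fun x => `|x| <= 1)%R s -> c <= F s) ->
  (2 ^+ k)%:E * c <= int_Rk k F.
Proof.
move=> c0; elim: k F => [|k IH] F F0 Fc /=; first by rewrite expr0 mul1e; exact: Fc.
have leb_11 : leb `[(-1)%R, 1%R] = 2%:E.
  rewrite lebesgue_measure_itv/= lte_fin ifT; last by rewrite -subr_gt0 opprK.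
  by rewrite -EFinD opprK.
apply: (@le_trans _ _ (\int[leb]_(x in `[(-1)%R, 1%R]) ((2 ^+ k)%:E * c))).
  by rewrite integral_cst// [X in _ <= _ * X]leb_11 muleAC -EFinM exprSr.
apply: ge0_le_integral_subset => //.
- by move=> x _; rewrite mule_ge0// lee_fin exprn_ge0.
- by move=> x _; exact: int_Rk_ge0.
move=> x; rewrite /= in_itv/= => x1; apply: IH => // s sk sa.
by apply: Fc; rewrite /= ?sk// sa andbT ler_norml.
Qed.

End int_Rk.

Section scale_mixture_of_normals.
Local Open Scope ereal_scope.
Context (R : realType).

Lemma normal_pdf01_gt0 (x : R) : (0 < normal_pdf 0 1 x)%R.
Proof.
rewrite /normal_pdf oner_eq0 /= mulr_gt0 ?expR_gt0//.
by apply: normal_peak_gt0; rewrite oner_eq0.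
Qed.

Lemma normal_pdf01_le_norm (x x' : R) : (`|x| <= `|x'|)%R ->
  (normal_pdf 0 1 x' <= normal_pdf 0 1 x)%R.
Proof.
move=> xx'; rewrite /normal_pdf oner_eq0 /=.
apply: ler_wpM2l; first exact: normal_peak_ge0.
rewrite /normal_fun ler_expR !subr0 !mulNr lerN2 ler_pM2r ?invr_gt0; last first.
  by rewrite expr1n mulr2n addr_gt0 ?ltr01.
rewrite -(real_normK (num_real x)) -(real_normK (num_real x')).
by rewrite ler_pXn2r// ?nnegrE.
Qed.

Variable H : R.-pker R ~> R.
Local Notation f := (smn_density H).

Definition smn_integrand (z t : R) : R :=
  (Num.sqrt t * normal_pdf 0 1 (Num.sqrt t * z))%R.

Lemma smn_integrand_ge0 z t : (0 <= smn_integrand z t)%R.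
Proof. by rewrite mulr_ge0 ?sqrtr_ge0 ?normal_pdf_ge0. Qed.

Lemma measurable_smn_integrand z : measurable_fun setT (smn_integrand z).
Proof.
apply: continuous_measurable_fun => t; apply: cvgM; first exact: sqrt_continuous.
apply: (@continuous_comp _ _ _ (fun t => Num.sqrt t * z)%R (normal_pdf 0 1) t).
  by apply: cvgM; [exact: sqrt_continuous|exact: cvg_cst].
by apply: continuous_normal_pdf; rewrite oner_eq0.
Qed.

Lemma smn_density_ge0 z dl : 0 <= f z dl.
Proof. by apply: integral_ge0 => t _; rewrite lee_fin smn_integrand_ge0. Qed.

Lemma smn_density_le_norm z z' dl : (`|z| <= `|z'|)%R -> f z' dl <= f z dl.
Proof.
move=> zz'; apply: ge0_le_integral_subset => // t _.
- by rewrite lee_fin smn_integrand_ge0.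
- by rewrite lee_fin smn_integrand_ge0.
rewrite lee_fin ler_wpM2l ?sqrtr_ge0// normal_pdf01_le_norm// !normrM.
by rewrite ler_wpM2l.
Qed.

Lemma smn_density_gt0 z dl : H dl `]0%R, +oo[ = 1 -> 0 < f z dl.
Proof.
move=> H1; apply: (@ge0_integral_gt0_support _ _ _ (H dl) _ (fun=> 1)) => //.
- by apply/measurable_EFinP/measurable_funTS; exact: measurable_smn_integrand.
- by move=> t _; rewrite lee_fin smn_integrand_ge0.
- move=> t; rewrite /= in_itv/= andbT => t0 _.
  by rewrite eqe gt_eqF// mulr_gt0 ?sqrtr_gt0 ?normal_pdf01_gt0.
by rewrite integral_cst//= mul1e H1 lte01.
Qed.

Lemma measurable_smn_density z : measurable_fun setT (f z).
Proof.
rewrite /smn_density; under eq_fun do rewrite integral_mkcond.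
apply: (@measurable_fun_integral_kernel _ _ _ _ _ H).
- by move=> U mU; exact: measurable_kernel.
- by move=> t; rewrite /patch; case: ifPn; rewrite // lee_fin smn_integrand_ge0.
apply/(measurable_restrictT _ _).1 => //.
by apply/measurable_EFinP/measurable_funTS; exact: measurable_smn_integrand.
Qed.

End scale_mixture_of_normals.

Section two_piece_density.
Local Open Scope ereal_scope.
Context (R : realType) (f : R -> R -> \bar R) (a b : R -> R).
Hypothesis f_ge0 : forall z dl, 0 <= f z dl.
Hypothesis f_le_norm : forall z z' dl, (`|z| <= `|z'|)%R -> f z' dl <= f z dl.
Variables (sg dl gm : R).
Hypotheses (sg_gt0 : (0 < sg)%R) (a_gt0 : (0 < a gm)%R) (b_gt0 : (0 < b gm)%R).

Let tp_const_ge0 : 0 <= (2 / (sg * (a gm + b gm)))%:E.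
Proof. by rewrite lee_fin divr_ge0// ltW// mulr_gt0// addr_gt0. Qed.

Let le_norm_div (z u v : R) : (0 < u)%R -> (u <= v)%R -> (`|z / v| <= `|z / u|)%R.
Proof.
move=> u0 uv; have v0 : (0 < v)%R by exact: lt_le_trans uv.
rewrite !normrM !normrV ?unitfE ?gt_eqF// (gtr0_norm u0) (gtr0_norm v0).
by rewrite ler_wpM2l// lef_pV2 ?posrE.
Qed.

Lemma tp_density_ge0 z : 0 <= tp_density f a b 0 sg dl gm z.
Proof. by rewrite /tp_density mule_ge0//; case: ifPn. Qed.

Lemma tp_density_le_max z : tp_density f a b 0 sg dl gm z <=
  (2 / (sg * (a gm + b gm)))%:E * f (z / (sg * Num.max (a gm) (b gm)))%R dl.
Proof.
rewrite /tp_density subr0; apply: lee_wpmul2l => //.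
by case: ifPn => _; apply/f_le_norm/le_norm_div;
  rewrite ?mulr_gt0// ler_pM2l// ?le_max lexx ?orbT.
Qed.

Lemma tp_density_ge_min z :
  (2 / (sg * (a gm + b gm)))%:E * f (z / (sg * Num.min (a gm) (b gm)))%R dl <=
  tp_density f a b 0 sg dl gm z.
Proof.
rewrite /tp_density subr0; apply: lee_wpmul2l => //.
by case: ifPn => _; apply/f_le_norm/le_norm_div;
  rewrite ?mulr_gt0 ?lt_min ?a_gt0 ?b_gt0// ler_pM2l// ?ge_min lexx ?orbT.
Qed.

End two_piece_density.

Section two_piece_regression.
Local Open Scope ereal_scope.
Context (R : realType) (n p : nat) (X : 'M[R]_(n, p)) (y : 'I_n -> R).
Context (f : R -> R -> \bar R) (a b : R -> R) (q : R).
Context (Delta Gamma : set R) (pd pg : R -> R).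
Local Notation leb := (@lebesgue_measure R).

Hypothesis f_ge0 : forall z dl, 0 <= f z dl.
Hypothesis f_le_norm : forall z z' dl, (`|z| <= `|z'|)%R -> f z' dl <= f z dl.
Hypothesis pd_ge0 : forall dl, Delta dl -> (0 <= pd dl)%R.
Hypothesis ab_gt0 : forall gm, Gamma gm -> (0 < a gm)%R /\ (0 < b gm)%R.
Hypothesis pg_ge0 : forall gm, Gamma gm -> (0 <= pg gm)%R.

Definition sym_integrand dl sg (beta : seq R) :=
  (\prod_(j < n) ((sg^-1)%:E * f ((y j - lin_pred X beta j) / sg)%R dl)) *
    (sg `^ (- q) * pd dl)%:E.

Definition tp_integrand gm dl sg (beta : seq R) :=
  (\prod_(j < n) tp_density f a b 0%R sg dl gm (y j - lin_pred X beta j)%R) *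
    (sg `^ (- q) * pd dl * pg gm)%:E.

Definition param_mass (F : R -> R -> seq R -> \bar R) :=
  \int[leb]_(dl in Delta) \int[leb]_(sg in `]0%R, +oo[) int_Rk p (F dl sg).

(* At c = min (a, b) and c = max (a, b) this is the integrand of (ii) and (iii). *)
Definition tp_weight gm (c : R) :=
  (c `^ (n%:R + q - 1) / (a gm + b gm) ^+ n * pg gm)%R.

Let pos_itv (x : R) : `]0%R, +oo[ x -> (0 < x)%R.
Proof. by rewrite /= in_itv/= andbT. Qed.

Lemma sym_integrand_ge0 dl sg beta : Delta dl -> (0 < sg)%R ->
  0 <= sym_integrand dl sg beta.
Proof.
move=> /pd_ge0 pd0 sg0; rewrite mule_ge0 ?lee_fin ?mulr_ge0 ?powR_ge0//.
by apply: prode_ge0 => j _; rewrite mule_ge0// lee_fin invr_ge0 ltW.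
Qed.

Lemma tp_integrand_ge0 gm dl sg beta : Gamma gm -> Delta dl -> (0 < sg)%R ->
  0 <= tp_integrand gm dl sg beta.
Proof.
move=> /[dup] /ab_gt0[a0 b0] /pg_ge0 pg0 /pd_ge0 pd0 sg0.
rewrite mule_ge0 ?lee_fin ?mulr_ge0 ?powR_ge0//.
by apply: prode_ge0 => j _; exact: tp_density_ge0.
Qed.

Lemma param_mass_ge0 F : (forall dl sg beta, Delta dl -> (0 < sg)%R -> 0 <= F dl sg beta) ->
  0 <= param_mass F.
Proof.
move=> F0; apply: integral_ge0 => dl Ddl; apply: integral_ge0 => sg /pos_itv sg0.
by apply: int_Rk_ge0 => beta; exact: F0.
Qed.

Lemma le_param_mass F G :
  (forall dl sg beta, Delta dl -> (0 < sg)%R -> 0 <= F dl sg beta) ->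
  (forall dl sg beta, Delta dl -> (0 < sg)%R -> F dl sg beta <= G dl sg beta) ->
  param_mass F <= param_mass G.
Proof.
move=> F0 FG; have G0 dl sg beta : Delta dl -> (0 < sg)%R -> 0 <= G dl sg beta.
  by move=> Ddl sg0; apply: le_trans (FG _ _ _ Ddl sg0); exact: F0.
apply: ge0_le_integral_subset => // dl Ddl.
- by apply: integral_ge0 => sg /pos_itv sg0; apply: int_Rk_ge0 => beta; exact: F0.
- by apply: integral_ge0 => sg /pos_itv sg0; apply: int_Rk_ge0 => beta; exact: G0.
apply: ge0_le_integral_subset => // sg /pos_itv sg0.
- by apply: int_Rk_ge0 => beta; exact: F0.
- by apply: int_Rk_ge0 => beta; exact: G0.
by apply: le_int_Rk => beta; [exact: F0|exact: FG].
Qed.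

Lemma param_massZl_dilation F (K c : R) : (0 <= K)%R -> (0 < c)%R ->
  (forall dl sg beta, Delta dl -> (0 < sg)%R -> 0 <= F dl sg beta) ->
  param_mass (fun dl sg beta => (K * c)%:E * F dl (sg * c)%R beta) =
    K%:E * param_mass F.
Proof.
move=> K0 c0 F0; have Kc0 : (0 <= K * c)%R by rewrite mulr_ge0// ltW.
have sigma_mass_ge0 dl : Delta dl ->
    forall sg, (0 < sg)%R -> 0 <= int_Rk p (F dl sg).
  by move=> Ddl sg sg0; apply: int_Rk_ge0 => beta; exact: F0.
rewrite /param_mass -ge0_integralZl_sup//; last first.
  by move=> dl Ddl; apply: integral_ge0 => sg /pos_itv; exact: sigma_mass_ge0.
apply: eq_integral => dl /set_mem Ddl.
transitivity (\int[leb]_(sg in `]0%R, +oo[)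
    ((K * c)%:E * int_Rk p (F dl (sg * c)%R))).
  apply: eq_integral => sg /set_mem/pos_itv sg0; apply: int_RkZl => // beta.
  by apply: F0; rewrite ?mulr_gt0.
rewrite ge0_integralZl_sup//; last first.
  by move=> sg /pos_itv sg0; apply: sigma_mass_ge0; rewrite ?mulr_gt0.
rewrite (@ge0_integral_dilation _ c (fun sg => int_Rk p (F dl sg)))//; last first.
  exact: sigma_mass_ge0.
by rewrite muleA -EFinM mulrK ?unitfE ?gt_eqF.
Qed.

Lemma tp_integrand_factor gm dl sg beta (c : R) : Gamma gm -> (0 < sg)%R -> (0 < c)%R ->
  (\prod_(j < n) ((2 / (sg * (a gm + b gm)))%:E *
     f ((y j - lin_pred X beta j) / (sg * c))%R dl)) * (sg `^ (- q) * pd dl * pg gm)%:E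
  = ((2 ^+ n * tp_weight gm c) * c)%:E * sym_integrand dl (sg * c) beta.
Proof.
move=> /ab_gt0[a0 b0] sg0 c0; have ab0 : (0 < a gm + b gm)%R by rewrite addr_gt0.
have prodZl (u : R) (F : 'I_n -> \bar R) :
    \prod_(j < n) (u%:E * F j) = (u ^+ n)%:E * \prod_(j < n) F j.
  by rewrite big_split /= prodEFin prodr_const card_ord.
rewrite /sym_integrand !prodZl muleAC -EFinM muleC.
rewrite [X in _ = _ * X]muleAC -EFinM muleA -EFinM [RHS]muleC.
congr (_ * _%:E); rewrite /tp_weight.
have -> : (c `^ (n%:R + q - 1) = c ^+ n * c `^ q / c)%R.
  rewrite -powR_mulrn ?ltW// -powRD ?(gt_eqF c0) ?implybT//.
  rewrite -[X in _ = (_ / X)%R](powRr1 (ltW c0)).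
  by rewrite -powRB ?(gt_eqF c0) ?implybT// powRr1 ?ltW.
rewrite powRM ?ltW// !powRN !exprMn !exprVn !exprMn.
have [sgn_gt0 cn_gt0 abn_gt0] : [/\ 0 < sg ^+ n, 0 < c ^+ n & 0 < (a gm + b gm) ^+ n]%R.
  by split; apply: exprn_gt0.
field; rewrite ?gt_eqF ?powR_gt0//.
Qed.

Lemma tp_integrand_le gm dl sg beta : Gamma gm -> Delta dl -> (0 < sg)%R ->
  tp_integrand gm dl sg beta <=
    ((2 ^+ n * tp_weight gm (Num.max (a gm) (b gm))) * Num.max (a gm) (b gm))%:E *
      sym_integrand dl (sg * Num.max (a gm) (b gm)) beta.
Proof.
move=> Ggm /pd_ge0 pd0 sg0; have [a0 b0] := ab_gt0 Ggm.
rewrite -tp_integrand_factor// ?lt_max ?a0//; apply: lee_wpmul2r.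
  by rewrite lee_fin !mulr_ge0 ?powR_ge0 ?pg_ge0.
by apply: lee_prod => j _; rewrite tp_density_ge0// tp_density_le_max.
Qed.

Lemma tp_integrand_ge gm dl sg beta : Gamma gm -> Delta dl -> (0 < sg)%R ->
  ((2 ^+ n * tp_weight gm (Num.min (a gm) (b gm))) * Num.min (a gm) (b gm))%:E *
    sym_integrand dl (sg * Num.min (a gm) (b gm)) beta <= tp_integrand gm dl sg beta.
Proof.
move=> Ggm /pd_ge0 pd0 sg0; have [a0 b0] := ab_gt0 Ggm.
rewrite -tp_integrand_factor// ?lt_min ?a0//; apply: lee_wpmul2r.
  by rewrite lee_fin !mulr_ge0 ?powR_ge0 ?pg_ge0.
apply: lee_prod => j _; rewrite tp_density_ge_min// andbT.
by rewrite mule_ge0// lee_fin divr_ge0// ltW// mulr_gt0// addr_gt0.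
Qed.

Lemma tp_weight_ge0 gm (c : R) : Gamma gm -> (0 <= c)%R -> (0 <= tp_weight gm c)%R.
Proof.
move=> /[dup] /ab_gt0[a0 b0] /pg_ge0 pg0 c0.
by rewrite mulr_ge0// divr_ge0 ?powR_ge0// exprn_ge0// addr_ge0 ?ltW.
Qed.

Lemma tp_param_mass_le gm : Gamma gm ->
  param_mass (tp_integrand gm) <=
    (2 ^+ n * tp_weight gm (Num.max (a gm) (b gm)))%:E * param_mass sym_integrand.
Proof.
move=> Ggm; have [a0 b0] := ab_gt0 Ggm.
have c0 : (0 < Num.max (a gm) (b gm))%R by rewrite lt_max a0.
rewrite -(@param_massZl_dilation _ _ (Num.max (a gm) (b gm)))//; last 2 first.
- by rewrite mulr_ge0 ?exprn_ge0// tp_weight_ge0// ltW.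
- by move=> *; exact: sym_integrand_ge0.
apply: le_param_mass => dl sg beta Ddl sg0; first exact: tp_integrand_ge0.
exact: tp_integrand_le.
Qed.

Lemma tp_param_mass_ge gm : Gamma gm ->
  (2 ^+ n * tp_weight gm (Num.min (a gm) (b gm)))%:E * param_mass sym_integrand <=
    param_mass (tp_integrand gm).
Proof.
move=> Ggm; have [a0 b0] := ab_gt0 Ggm.
have c0 : (0 < Num.min (a gm) (b gm))%R by rewrite lt_min a0.
have w0 : (0 <= 2 ^+ n * tp_weight gm (Num.min (a gm) (b gm)))%R.
  by rewrite mulr_ge0 ?exprn_ge0// tp_weight_ge0// ltW.
rewrite -(@param_massZl_dilation _ _ (Num.min (a gm) (b gm)))//; last first.
  by move=> *; exact: sym_integrand_ge0.
apply: le_param_mass => dl sg beta Ddl sg0; last exact: tp_integrand_ge.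
by rewrite mule_ge0 ?sym_integrand_ge0 ?mulr_gt0// lee_fin mulr_ge0// ltW.
Qed.

Definition resid_bound : R :=
  (1 + \sum_(j < n) (`|y j| + \sum_(i < p) `|X j i|))%R.

Lemma resid_bound_gt0 : (0 < resid_bound)%R.
Proof. by rewrite ltr_pwDl ?ltr01// sumr_ge0// => j _; rewrite addr_ge0// sumr_ge0. Qed.

Lemma resid_le_bound beta j : size beta = p -> all (fun x => `|x| <= 1)%R beta ->
  (`|y j - lin_pred X beta j| <= resid_bound)%R.
Proof.
move=> sz /allP beta1; apply: le_trans (ler_normB _ _) _.
apply: (@le_trans _ _ (`|y j| + \sum_(i < p) `|X j i|)%R).
  rewrite lerD2l; apply: le_trans (ler_norm_sum _ _ _) _.
  by apply: ler_sum => i _; rewrite normrM ler_piMr// beta1// mem_nth// sz.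
rewrite /resid_bound (bigD1 j)//=.
have : (0 <= \sum_(k < n | k != j) (`|y k| + \sum_(i < p) `|X k i|))%R.
  by rewrite sumr_ge0// => k _; rewrite addr_ge0// sumr_ge0.
lra.
Qed.

Definition sym_cube_bound dl :=
  (\prod_(j < n) ((2^-1)%:E * f resid_bound dl)) * (2 `^ (- q) * pd dl)%:E.

Lemma sym_cube_bound_ge0 dl : Delta dl -> 0 <= sym_cube_bound dl.
Proof.
move=> /pd_ge0 pd0; rewrite mule_ge0 ?lee_fin ?mulr_ge0 ?powR_ge0//.
by apply: prode_ge0 => j _; rewrite mule_ge0// lee_fin invr_ge0.
Qed.

Hypothesis q_ge0 : (0 <= q)%R.

Lemma sym_integrand_ge_cube dl sg beta : Delta dl -> (1 <= sg <= 2)%R ->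
  size beta = p -> all (fun x => `|x| <= 1)%R beta ->
  sym_cube_bound dl <= sym_integrand dl sg beta.
Proof.
move=> /pd_ge0 pd0 /andP[sg1 sg2] sz beta1.
have sg0 : (0 < sg)%R by exact: lt_le_trans ltr01 sg1.
apply: lee_pmul; rewrite ?lee_fin ?mulr_ge0 ?powR_ge0//.
- by apply: prode_ge0 => j _; rewrite mule_ge0// lee_fin invr_ge0.
- apply: lee_prod => j _; rewrite mule_ge0 ?lee_fin ?invr_ge0//=.
  apply: lee_pmul; rewrite ?lee_fin ?invr_ge0// ?lef_pV2 ?posrE//.
  apply: f_le_norm; rewrite (gtr0_norm resid_bound_gt0).
  apply: le_trans (resid_le_bound j sz beta1).
  rewrite normrM normrV ?unitfE ?gt_eqF// (gtr0_norm sg0).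
  by rewrite ler_pdivrMr// ler_peMr.
- rewrite ler_wpM2r// !powRN lef_pV2 ?posrE ?powR_gt0//.
  by apply: ge0_ler_powR => //; rewrite nnegrE ltW.
Qed.

Lemma sigma_mass_ge_cube dl : Delta dl ->
  (2 ^+ p)%:E * sym_cube_bound dl <=
    \int[leb]_(sg in `]0%R, +oo[) int_Rk p (sym_integrand dl sg).
Proof.
move=> Ddl; have leb12 : leb `[1%R, 2%R] = 1.
  rewrite lebesgue_measure_itv/= lte_fin ifT ?ltr1n//.
  by rewrite -EFinD; congr EFin; rewrite -[2%R]natr1 addrK.
apply: (@le_trans _ _ (\int[leb]_(sg in `[1%R, 2%R]) ((2 ^+ p)%:E * sym_cube_bound dl))).
  by rewrite integral_cst// [X in _ <= _ * X]leb12 mule1.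
apply: ge0_le_integral_subset.
- by move=> x; rewrite /= !in_itv/= andbT => /andP[x1 _]; exact: lt_le_trans ltr01 x1.
- by move=> x _; rewrite mule_ge0 ?lee_fin ?exprn_ge0// sym_cube_bound_ge0.
- by move=> x /pos_itv x0; apply: int_Rk_ge0 => beta; exact: sym_integrand_ge0.
move=> x; rewrite /= in_itv/= => /[dup] /andP[x1 _] x12.
apply: int_Rk_ge_cube; first exact: sym_cube_bound_ge0.
  by move=> beta; apply: sym_integrand_ge0 => //; exact: lt_le_trans ltr01 x1.
by move=> beta sz beta1; exact: sym_integrand_ge_cube.
Qed.

Hypothesis f_gt0 : forall z dl, Delta dl -> 0 < f z dl.
Hypothesis measurable_f : forall z, measurable_fun Delta (f z).
Hypothesis measurable_Delta : measurable Delta.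
Hypothesis measurable_pd : measurable_fun Delta pd.
Hypothesis pd_proper : \int[leb]_(dl in Delta) (pd dl)%:E = 1.

Lemma sym_param_mass_gt0 : 0 < param_mass sym_integrand.
Proof.
have measurable_prod k :
    measurable_fun Delta (fun dl => \prod_(j < k) ((2^-1)%:E * f resid_bound dl)).
  elim: k => [|k IH]; first by under eq_fun do rewrite big_ord0; exact: measurable_cst.
  under eq_fun do rewrite big_ord_recr /=.
  by apply: emeasurable_funM => //; apply: emeasurable_funM.
apply: (@lt_le_trans _ _ (\int[leb]_(dl in Delta) ((2 ^+ p)%:E * sym_cube_bound dl))).
  apply: (@ge0_integral_gt0_support _ _ _ leb _ (fun dl => (pd dl)%:E)) => //.
  - exact/measurable_EFinP.
  - apply: emeasurable_funM => //; apply: emeasurable_funM; first exact: measurable_prod.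
    by apply/measurable_EFinP; apply: measurable_funM.
  - by move=> x Dx; rewrite mule_ge0 ?lee_fin ?exprn_ge0// sym_cube_bound_ge0.
  - move=> x Dx; rewrite eqe => pdx0; rewrite gt_eqF// mule_gt0 ?lte_fin ?exprn_gt0//.
    rewrite mule_gt0// ?lte_fin ?mulr_gt0 ?powR_gt0// ?lt0r ?pdx0 ?pd_ge0//.
    by apply: prode_gt0 => j _; rewrite mule_gt0 ?lte_fin ?invr_gt0// f_gt0.
  - by rewrite pd_proper lte01.
apply: ge0_le_integral_subset => //.
- by move=> x Dx; rewrite mule_ge0 ?lee_fin ?exprn_ge0// sym_cube_bound_ge0.
- move=> x Dx; apply: integral_ge0 => sg /pos_itv sg0.
  by apply: int_Rk_ge0 => beta; exact: sym_integrand_ge0.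
exact: sigma_mass_ge_cube.
Qed.

Hypothesis measurable_Gamma : measurable Gamma.
Hypotheses (measurable_a : measurable_fun Gamma a) (measurable_b : measurable_fun Gamma b).
Hypothesis measurable_pg : measurable_fun Gamma pg.
Hypothesis pg_proper : \int[leb]_(gm in Gamma) (pg gm)%:E = 1.

Lemma measurable_tp_weight (mm : R -> R -> R) :
  measurable_fun Gamma (fun gm => mm (a gm) (b gm)) ->
  measurable_fun Gamma (fun gm => (tp_weight gm (mm (a gm) (b gm)))%:E).
Proof.
move=> mmm; apply/measurable_EFinP.
apply: (eq_measurable_fun (fun gm => mm (a gm) (b gm) `^ (n%:R + q - 1) *
   ((a gm + b gm) ^+ n) `^ (-1) * pg gm)%R).
  move=> gm /set_mem /ab_gt0[a0 b0]; rewrite /tp_weight powR_inv1//.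
  by rewrite exprn_ge0// addr_ge0 ?ltW.
apply: measurable_funM => //; apply: measurable_funM.
  exact: (measurableT_comp (measurable_powR _)).
apply: (measurableT_comp (measurable_powR _)).
by apply: measurable_funX; exact: measurable_funD.
Qed.

Let min_weight gm := tp_weight gm (Num.min (a gm) (b gm)).
Let max_weight gm := tp_weight gm (Num.max (a gm) (b gm)).

Let min_weight_ge0 gm : Gamma gm -> (0 <= min_weight gm)%R.
Proof. by move=> Ggm; rewrite tp_weight_ge0// le_min !ltW//; case: (ab_gt0 Ggm). Qed.

Let max_weight_ge0 gm : Gamma gm -> (0 <= max_weight gm)%R.
Proof. by move=> Ggm; rewrite tp_weight_ge0// le_max ltW//; case: (ab_gt0 Ggm). Qed.

Lemma min_weight_integral_gt0 : 0 < \int[leb]_(gm in Gamma) (min_weight gm)%:E.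
Proof.
apply: (@ge0_integral_gt0_support _ _ _ leb _ (fun gm => (pg gm)%:E)) => //.
- exact/measurable_EFinP.
- by apply: measurable_tp_weight; exact: measurable_minr.
- move=> gm Ggm; have [a0 b0] := ab_gt0 Ggm; rewrite !eqe => pg0.
  rewrite /min_weight /tp_weight mulf_neq0// mulf_neq0//.
    by rewrite gt_eqF// powR_gt0// lt_min a0.
  by rewrite invr_eq0 expf_neq0// gt_eqF// addr_gt0.
- by rewrite pg_proper lte01.
Qed.

Let sym_mass := param_mass sym_integrand.
Let tp_mass := \int[leb]_(gm in Gamma) param_mass (tp_integrand gm).

Lemma tp_mass_ge :
  (2 ^+ n)%:E * sym_mass * \int[leb]_(gm in Gamma) (min_weight gm)%:E <= tp_mass.
Proof.
have S0 : 0 <= (2 ^+ n)%:E * sym_mass.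
  by rewrite mule_ge0 ?lee_fin ?exprn_ge0// ltW// sym_param_mass_gt0.
rewrite /tp_mass -(@ge0_integralZl _ _ _ leb)//; last first.
  by apply: measurable_tp_weight; exact: measurable_minr.
apply: ge0_le_integral_subset => // gm Ggm.
- by rewrite mule_ge0// lee_fin min_weight_ge0.
- by apply: param_mass_ge0 => *; exact: tp_integrand_ge0.
- by rewrite muleAC -EFinM tp_param_mass_ge.
Qed.

Lemma tp_mass_le :
  tp_mass <= (2 ^+ n)%:E * sym_mass * \int[leb]_(gm in Gamma) (max_weight gm)%:E.
Proof.
have S0 : 0 <= (2 ^+ n)%:E * sym_mass.
  by rewrite mule_ge0 ?lee_fin ?exprn_ge0// ltW// sym_param_mass_gt0.
rewrite /tp_mass -(@ge0_integralZl _ _ _ leb)//; last first.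
  by apply: measurable_tp_weight; exact: measurable_maxr.
apply: ge0_le_integral_subset => // gm Ggm.
- by apply: param_mass_ge0 => *; exact: tp_integrand_ge0.
- by rewrite mule_ge0// lee_fin max_weight_ge0.
- by rewrite muleAC -EFinM tp_param_mass_le.
Qed.

Theorem two_piece_posterior_propriety :
  (post_mass_TP X y f a b q Delta Gamma pd pg < +oo ->
     post_mass_sym X y f q Delta pd < +oo /\
     \int[leb]_(gm in Gamma) (min_weight gm)%:E < +oo) /\
  (post_mass_sym X y f q Delta pd < +oo /\
     \int[leb]_(gm in Gamma) (max_weight gm)%:E < +oo ->
   post_mass_TP X y f a b q Delta Gamma pd pg < +oo).
Proof.
rewrite -[post_mass_sym _ _ _ _ _ _]/sym_mass.
rewrite -[post_mass_TP _ _ _ _ _ _ _ _ _ _]/tp_mass.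
have S_gt0 : 0 < sym_mass := sym_param_mass_gt0.
have two_n_gt0 : 0 < (2 ^+ n : R)%:E by rewrite lte_fin exprn_gt0.
split=> [TP_fin|[S_fin max_fin]].
- have := le_lt_trans tp_mass_ge TP_fin.
  case/lt_pinfty_mule_gt0; rewrite ?mule_gt0 ?min_weight_integral_gt0// => + ->.
  by case/lt_pinfty_mule_gt0.
- apply: le_lt_trans tp_mass_le _; rewrite lte_mul_pinfty// ?mule_ge0 ?ltW//.
  by rewrite fin_numM// ge0_fin_numE// ltW.
Qed.

End two_piece_regression.

Unset Implicit Arguments.
Theorem theorem3p1 (R : realType) (n p : nat) (X : 'M[R]_(n, p)) (y : 'I_n -> R)
  (H : R.-pker R ~> R) (Delta Gamma : set R) (a b : R -> R) (q : R)
  (pi_delta pi_gamma : R -> R) :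
  \rank X = p ->
  0 <= q ->
  (* mixing distributions live on R_+ *)
  (forall delta, Delta delta -> H delta `]0%R, +oo[ = 1%E) ->
  (* a, b : Gamma -> (0, oo), measurable *)
  measurable Gamma ->
  (forall gamma, Gamma gamma -> 0 < a gamma /\ 0 < b gamma) ->
  measurable_fun Gamma a -> measurable_fun Gamma b ->
  (* proper priors pi(delta) on Delta and pi(gamma) on Gamma *)
  measurable Delta ->
  (forall delta, Delta delta -> 0 <= pi_delta delta) ->
  measurable_fun Delta pi_delta ->
  (\int[@lebesgue_measure R]_(delta in Delta) (pi_delta delta)%:E = 1)%E ->
  (forall gamma, Gamma gamma -> 0 <= pi_gamma gamma) ->
  measurable_fun Gamma pi_gamma ->
  (\int[@lebesgue_measure R]_(gamma in Gamma) (pi_gamma gamma)%:E = 1)%E ->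
  let f := smn_density H in
  let cond_i := (post_mass_sym X y f q Delta pi_delta < +oo)%E in
  let cond_ii := (\int[@lebesgue_measure R]_(gamma in Gamma)
        ((Num.min (a gamma) (b gamma)) `^ (n%:R + q - 1) /
           (a gamma + b gamma) ^+ n * pi_gamma gamma)%:E < +oo)%E in
  let cond_iii := (\int[@lebesgue_measure R]_(gamma in Gamma)
        ((Num.max (a gamma) (b gamma)) `^ (n%:R + q - 1) /
           (a gamma + b gamma) ^+ n * pi_gamma gamma)%:E < +oo)%E in
  let proper := (post_mass_TP X y f a b q Delta Gamma pi_delta pi_gamma < +oo)%E in
  (proper -> cond_i /\ cond_ii) /\ (cond_i /\ cond_iii -> proper).
Proof.
move=> _ q0 H1 *; apply: two_piece_posterior_propriety => //.
- exact: smn_density_ge0.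
- exact: smn_density_le_norm.
- by move=> z dl /H1; exact: smn_density_gt0.
- by move=> z; apply: measurable_funTS; exact: measurable_smn_density.
Qed.
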